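(* Let $\mathbb{K}$ be a field of characteristic zero and $x$ an indeterminate. For every $k\ge1$ the algebra of $\mathbb{Z}_2$-relations $A^{\mathbb{Z}_2}_k(x)$ over $\mathbb{K}(x)$ is semisimple.
   Context: The partition algebra $A_n(x)$ is the $\mathbb{K}(x)$-vector space with basis the set partitions of $\{1,\dots,n\}\cup\{1',\dots,n'\}$, with multiplication $d_1\cdot d_2=x^{l}d_3$, where $d_3$ is obtained by placing $d_1$ above $d_2$, identifying the bottom vertices of $d_1$ with the top vertices of $d_2$, taking the induced partition of the outer two rows, and $l$ is the number of connected components lying entirely in the middle row. Let $\mathbb{Z}_2=\{e,g\}$ act on $X=(\{1,\dots,k\}\cup\{1',\dots,k'\})\times\mathbb{Z}_2$ by $h\cdot(i,a)=(i,ha)$; a set partition of $X$ is $\mathbb{Z}_2$-stable if $g$ maps each block to a block. Identifying $(i,e)\mapsto 2i-1$ and $(i,g)\mapsto 2i$ (and similarly for primed vertices), $\mathbb{Z}_2$-stable partitions of $X$ become $2k$-partition diagrams. $A^{\mathbb{Z}_2}_k(x)$ is the $\mathbb{K}(x)$-linear span of the $\mathbb{Z}_2$-stable partitions of $X$ inside $A_{2k}(x)$; it is a subalgebra. *)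

From HB Require Import structures.
From mathcomp Require Import all_boot all_order all_algebra.
Set Implicit Arguments. Unset Strict Implicit. Unset Printing Implicit Defensive.
Import Order.TTheory GRing.Theory Num.Theory.
Local Open Scope ring_scope.

(* Vertices of an n-partition diagram: inl i = top vertex i, inr i = bottom vertex i'. *)
Definition vtx (n : nat) := ('I_n + 'I_n)%type.
Definition diagram (n : nat) := {set {set vtx n}}.
Definition is_diagram (n : nat) (d : diagram n) : bool := partition d [set: vtx n].

Definition same_block (T : finType) (P : {set {set T}}) (a b : T) : bool :=
  pblock P a == pblock P b.

(* Three stacked rows: row 0 = top of d1, row 1 = middle (bottom of d1 = top of d2),
   row 2 = bottom of d2. *)
Definition wvtx (n : nat) := ('I_3 * 'I_n)%type.

Definition emb1 (n : nat) (w : wvtx n) : option (vtx n) :=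
  match val w.1 with 0%N => Some (inl w.2) | 1%N => Some (inr w.2) | _ => None end.
Definition emb2 (n : nat) (w : wvtx n) : option (vtx n) :=
  match val w.1 with 1%N => Some (inl w.2) | 2%N => Some (inr w.2) | _ => None end.

Definition cedge (n : nat) (d1 d2 : diagram n) : rel (wvtx n) := fun u v =>
  (match emb1 u, emb1 v with Some a, Some b => same_block d1 a b | _, _ => false end)
  || (match emb2 u, emb2 v with Some a, Some b => same_block d2 a b | _, _ => false end).

Definition outer (n : nat) (v : vtx n) : wvtx n :=
  match v with inl i => (@ord0 2, i) | inr i => (@ord_max 2, i) end.

Definition dcomp (n : nat) (d1 d2 : diagram n) : diagram n :=
  [set [set v | connect (cedge d1 d2) (outer v0) (outer v)] | v0 : vtx n].

Definition nloops (n : nat) (d1 d2 : diagram n) : nat :=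
  #|[set [set w | connect (cedge d1 d2) w0 w] | w0 in
      [pred w0 : wvtx n | [forall w, connect (cedge d1 d2) w0 w ==> (val w.1 == 1%N)]]]|.

(* Ambient space: F-valued coordinate functions on diagram candidates; the partition
   algebra A_n(x) is the subspace of those supported on genuine diagrams. *)
Notation PA F n := {ffun diagram n -> F^o}.

(* d1 . d2 = x^l d3, extended bilinearly. *)
Definition pa_mul (F : fieldType) (n : nat) (x : F) (f g : PA F n) : PA F n :=
  [ffun d => \sum_(d1 : diagram n) \sum_(d2 : diagram n)
     (if dcomp d1 d2 == d then f d1 * g d2 * x ^+ nloops d1 d2 else 0)].

(* Z_2 action: with (i,e) |-> 2i-1, (i,g) |-> 2i (1-indexed), i.e. 0-indexed
   g swaps 2i and 2i+1. *)
Definition gsw (n : nat) (j : 'I_n) : 'I_n :=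
  insubd j (if odd j then j.-1 else j.+1).
Definition gact (n : nat) (v : vtx n) : vtx n :=
  match v with inl i => inl (gsw i) | inr i => inr (gsw i) end.
Definition z2_stable (n : nat) (d : diagram n) : bool :=
  [forall B in d, [set gact v | v in B] \in d].

Definition z2_alg (F : fieldType) (k : nat) : pred (PA F k.*2) :=
  fun f => [forall d, (f d != 0) ==> (is_diagram d && z2_stable d)].

(* Semisimplicity of a (finite-dimensional) subalgebra S of an ambient space V
   with multiplication mul: it has no nonzero nilpotent two-sided ideal
   (i.e. its Jacobson radical is zero). *)
Definition is_ideal (F : fieldType) (V : lmodType F) (S : pred V) (mul : V -> V -> V)
  (I : V -> Prop) : Prop :=
  [/\ (forall a, I a -> S a), I 0, (forall a b, I a -> I b -> I (a + b)),
      (forall (c : F) a, I a -> I (c *: a)) &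
      (forall a b, S a -> I b -> I (mul a b) /\ I (mul b a))].

Definition nilpotent_ideal (F : fieldType) (V : lmodType F) (mul : V -> V -> V)
  (I : V -> Prop) : Prop :=
  exists m : nat, forall (a : V) (s : seq V), size s = m -> I a ->
    (forall b, b \in s -> I b) -> foldl mul a s = 0.

Definition semisimple (F : fieldType) (V : lmodType F) (S : pred V)
  (mul : V -> V -> V) : Prop :=
  forall I : V -> Prop, is_ideal S mul I -> nilpotent_ideal mul I ->
    forall a, I a -> a = 0.

Definition xK (K : fieldType) : {fraction {poly K}} := FracField.tofrac 'X.

(* For N >= 1, let a diagram d act on the tensor space (K^N)^{(x)n} by the 0/1 matrix
   whose entry at (i, j) is 1 iff the labels i on the top row and j on the bottom row
   are constant on the blocks of d.  Composition becomes the matrix product with x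
   specialised to N, every closed loop contributing a free label.  After clearing
   denominators an element of a nilpotent ideal has polynomial coefficients p_d; its
   product with a diagram e of the span is again in the ideal, so its image is a
   nilpotent matrix and has trace 0:  sum_d p_d(N) N^kappa(e,d) = 0, where kappa(e,d)
   counts the components of the closure of e d.  In characteristic 0 this holds as a
   polynomial identity in N, and taking e to be the flip of the diagram d0 maximising
   2 deg p_d + #blocks(d), the term of d0 has strictly the largest degree.  Hence p = 0. *)

From HB Require Import structures.
From mathcomp Require Import all_boot all_order all_algebra generic_quotient.
From mathcomp Require Import zify.
Import GRing.Theory.

Set Implicit Arguments.
Unset Strict Implicit.
Unset Printing Implicit Defensive.

Section Labelings.

Variables (T : finType) (r : rel T).

Definition respects N (L : {ffun T -> 'I_N}) : bool :=
  [forall u, forall v, r u v ==> (L u == L v)].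

Lemma respects_connect N (L : {ffun T -> 'I_N}) u v :
  respects L -> connect r u v -> L u = L v.
Proof.
move=> /forallP rL /connectP [p pth ->] {v}.
elim: p u pth => //= w p IHp u /andP [ruw pth].
by rewrite -(IHp w pth); apply/eqP; exact: implyP (forallP (rL u) w) ruw.
Qed.

Definition free_roots (O : {set T}) : {set T} :=
  [set s | fingraph.roots r s & [forall w, connect r s w ==> (w \notin O)]].

Definition extensions N (O : {set T}) (o : T -> 'I_N) : {set {ffun T -> 'I_N}} :=
  [set L | respects L & [forall x in O, L x == o x]].

Definition consistent_on N (O : {set T}) (o : T -> 'I_N) : bool :=
  [forall x in O, forall y in O, connect r x y ==> (o x == o y)].

Hypothesis r_sym : symmetric r.

Let r_csym : connect_sym r. Proof. exact: sym_connect_sym. Qed.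

(* An extension is free on the classes not meeting [O] and forced by [o] on the
   others. *)
Lemma card_extensions N O (o : T -> 'I_N) :
  #|extensions O o| = if consistent_on O o then N ^ #|free_roots O| else 0.
Proof.
case: ifP => [o_cons | /negP o_incons]; last first.
  apply/eqP; rewrite cards_eq0; apply/eqP/setP => L; rewrite !inE.
  apply/negP => /andP [rL /forall_inP oL]; apply: o_incons.
  apply/forall_inP => x xO; apply/forall_inP => y yO; apply/implyP => cxy.
  by rewrite -(eqP (oL x xO)) -(eqP (oL y yO)) (respects_connect rL cxy).
pose S := {s | s \in free_roots O}.
pose anchor x := [pick w in O | connect r (fingraph.root r x) w].
pose ext (g : {ffun S -> 'I_N}) : {ffun T -> 'I_N} :=
  [ffun x => if insub (fingraph.root r x) is Some s then g s
             else if anchor x is Some w then o w else o (fingraph.root r x)].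
have ext_inj : injective ext.
  move=> g1 g2 /ffunP eq_ext; apply/ffunP => s.
  move: (eq_ext (val s)); rewrite !ffunE.
  by have := valP s; rewrite inE => /andP [/eqP -> _]; rewrite valK.
suff -> : extensions O o = ext @: setT.
  by rewrite card_imset // cardsT card_ffun card_ord card_sig.
apply/setP => L; rewrite inE; apply/idP/imsetP.
- case/andP => rL /forall_inP oL; exists [ffun s => L (val s)]; first by rewrite inE.
  apply/ffunP => x; rewrite !ffunE.
  case: insubP => [s _ vs | not_free].
    by rewrite ffunE vs; apply: respects_connect rL _; exact: fingraph.connect_root.
  rewrite /anchor; case: pickP => [w /andP [wO cw] | no_anchor].
    rewrite -(eqP (oL w wO)); apply: respects_connect rL _.
    exact: connect_trans (fingraph.connect_root _ _) cw.
  case/negP: not_free.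
  rewrite inE /fingraph.roots (fingraph.root_root r_csym) eqxx /=.
  apply/forallP => w; apply/implyP => cw; apply/negP => wO.
  by move: (no_anchor w); rewrite wO cw.
- case=> g _ ->; apply/andP; split.
    apply/forallP => u; apply/forallP => v; apply/implyP => ruv.
    by rewrite !ffunE /anchor (fingraph.rootP r_csym (connect1 ruv)).
  apply/forall_inP => x xO; rewrite ffunE.
  case: insubP => [s | _].
    rewrite inE => /andP [_ /forallP /(_ x)].
    by rewrite xO implybF r_csym fingraph.connect_root.
  rewrite /anchor; case: pickP => [w /andP [wO cw] | /(_ x)].
    have cxw : connect r x w by apply: connect_trans (fingraph.connect_root _ _) cw.
    by rewrite eq_sym; exact: implyP (forall_inP (forall_inP o_cons x xO) w wO) cxw.
  by rewrite xO r_csym fingraph.connect_root.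
Qed.

Lemma card_respects N :
  #|[set L : {ffun T -> 'I_N.+1} | respects L]| = N.+1 ^ n_comp r T.
Proof.
have := card_extensions set0 (fun=> ord0 : 'I_N.+1).
have -> : consistent_on set0 (fun=> ord0 : 'I_N.+1) by apply/forall_inP => x; rewrite inE.
have -> : #|free_roots set0| = n_comp r T.
  apply: eq_card => s; rewrite !inE; congr (_ && _).
  by apply/forallP => w; rewrite inE implybT.
move=> <-; apply: eq_card => L; rewrite !inE.
by case: (respects L) => //=; apply/esym/forall_inP => x; rewrite inE.
Qed.

Lemma card_closed_classes (Q : pred T) :
  #|[set [set w | connect r w0 w] | w0 in [pred w0 | [forall w, connect r w0 w ==> Q w]]]|
  = #|[set s | fingraph.roots r s & [forall w, connect r s w ==> Q w]]|.
Proof.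
set R := [set s | _ & _].
have eq_root w0 : connect r w0 =1 connect r (fingraph.root r w0).
  exact/(same_connect r_csym)/fingraph.connect_root.
rewrite -[RHS](@card_in_imset _ _ (fun s => [set w | connect r s w])); last first.
  move=> s1 s2; rewrite !inE => /andP [/eqP rs1 _] /andP [/eqP rs2 _] /setP /(_ s2).
  by rewrite !inE connect0 => /(fingraph.rootP r_csym); rewrite rs1 rs2.
apply: eq_card => B; apply/imsetP/imsetP => [[w0 Qw0 ->] | [s sR ->]].
  exists (fingraph.root r w0).
    rewrite inE /fingraph.roots (fingraph.root_root r_csym) eqxx /=.
    by apply/forallP => w; rewrite -eq_root; exact: forallP Qw0 w.
  by apply/setP => w; rewrite !inE eq_root.
by exists s => //; move: sR; rewrite inE => /andP [].
Qed.

End Labelings.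

Lemma eq_respects (T : finType) (r1 r2 : rel T) N (L : {ffun T -> 'I_N}) :
  r1 =2 r2 -> respects r1 L = respects r2 L.
Proof. by move=> eq_r; apply: eq_forallb => u; apply: eq_forallb => v; rewrite eq_r. Qed.

Lemma respects_relU (T : finType) (r1 r2 : rel T) N (L : {ffun T -> 'I_N}) :
  respects (relU r1 r2) L = respects r1 L && respects r2 L.
Proof.
apply/forallP/andP => [rL | [/forallP r1L /forallP r2L] u].
  by split; apply/forallP => u; apply/forallP => v; apply/implyP => ruv;
    apply: (implyP (forallP (rL u) v)); rewrite /= ruv ?orbT.
apply/forallP => v; apply/implyP => /orP [ruv | ruv].
  exact: implyP (forallP (r1L u) v) ruv.
exact: implyP (forallP (r2L u) v) ruv.
Qed.

Lemma respects_relUl (T : finType) (r1 r2 : rel T) N (L : {ffun T -> 'I_N}) :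
  respects (relU r1 r2) L -> respects r1 L.
Proof. by rewrite respects_relU => /andP []. Qed.

Lemma respects_relUr (T : finType) (r1 r2 : rel T) N (L : {ffun T -> 'I_N}) :
  respects (relU r1 r2) L -> respects r2 L.
Proof. by rewrite respects_relU => /andP []. Qed.

Lemma respects_conj (T : finType) (r : rel T) (f : T -> T) N (L : {ffun T -> 'I_N}) :
  involutive f -> respects (fun u v => r (f u) (f v)) L = respects r [ffun v => L (f v)].
Proof.
move=> fK; apply/forallP/forallP => rL u.
  apply/forallP => v; apply/implyP => ruv; rewrite !ffunE.
  by apply: (implyP (forallP (rL (f u)) (f v))); rewrite !fK.
apply/forallP => v; apply/implyP => ruv.
by move: (implyP (forallP (rL (f u)) (f v)) ruv); rewrite !ffunE !fK.
Qed.

Section CompareComponents.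

Variables (T : finType) (r1 r2 : rel T).
Hypotheses (r1_sym : symmetric r1) (r2_sym : symmetric r2).
Hypothesis respects12 : forall L : {ffun T -> 'I_2}, respects r1 L -> respects r2 L.

(* Components are compared by counting 2-colourings: there are 2 ^ n_comp of them. *)
Lemma n_comp_le_respects : n_comp r1 T <= n_comp r2 T.
Proof.
rewrite -(@leq_exp2l 2) // -!(card_respects _ 1) //.
by apply: subset_leq_card; apply/subsetP => L; rewrite !inE; apply: respects12.
Qed.

Lemma respects_n_comp_eq : n_comp r1 T = n_comp r2 T ->
  forall L : {ffun T -> 'I_2}, respects r2 L -> respects r1 L.
Proof.
move=> eq_comp L.
have sub12 : [set L : {ffun T -> 'I_2} | respects r1 L] \subset [set L | respects r2 L].
  by apply/subsetP => L'; rewrite !inE; apply: respects12.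
have := subset_cardP _ sub12 L; rewrite !inE => -> //.
by rewrite !(card_respects _ 1) // eq_comp.
Qed.

End CompareComponents.

Lemma relU_sym (T : finType) (r1 r2 : rel T) :
  symmetric r1 -> symmetric r2 -> symmetric (relU r1 r2).
Proof. by move=> s1 s2 u v; rewrite /= s1 s2. Qed.

Lemma n_comp_relUl (T : finType) (r1 r2 : rel T) :
  symmetric r1 -> symmetric r2 -> n_comp (relU r1 r2) T <= n_comp r1 T.
Proof.
by move=> s1 s2; apply: n_comp_le_respects (relU_sym s1 s2) s1 _ => L /respects_relUl.
Qed.

Lemma n_comp_relUr (T : finType) (r1 r2 : rel T) :
  symmetric r1 -> symmetric r2 -> n_comp (relU r1 r2) T <= n_comp r2 T.
Proof.
by move=> s1 s2; apply: n_comp_le_respects (relU_sym s1 s2) s2 _ => L /respects_relUr.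
Qed.

Lemma n_comp_relUid (T : finType) (r : rel T) : n_comp (relU r r) T = n_comp r T.
Proof. by apply/eq_n_comp/eq_connect => u v; rewrite /= orbb. Qed.

Section Partitions.

Variable T : finType.
Implicit Types P Q : {set {set T}}.

Definition coblock P : rel T := fun u v => [exists B in P, (u \in B) && (v \in B)].

Lemma coblock_sym P : symmetric (coblock P).
Proof.
move=> u v; apply/exists_inP/exists_inP => -[B BP /andP [uB vB]];
  by exists B; rewrite ?uB ?vB.
Qed.

Lemma coblockE P : partition P [set: T] -> coblock P =2 same_block P.
Proof.
case/and3P => /eqP coverP trivP _ u v; rewrite /coblock /same_block.
apply/exists_inP/eqP => [[B BP /andP [uB vB]] | eq_uv].
  by rewrite (def_pblock trivP BP uB) (def_pblock trivP BP vB).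
exists (pblock P u); first by apply: pblock_mem; rewrite coverP inE.
by rewrite mem_pblock eq_uv mem_pblock coverP !inE.
Qed.

Lemma pblock_subset_respects P Q : partition P [set: T] -> partition Q [set: T] ->
  (forall L : {ffun T -> 'I_2}, respects (coblock P) L -> respects (coblock Q) L) ->
  forall v, pblock Q v \subset pblock P v.
Proof.
move=> partP partQ respPQ v.
have [/eqP coverP trivP _] := and3P partP; have [/eqP coverQ trivQ _] := and3P partQ.
pose L : {ffun T -> 'I_2} := [ffun u => if same_block P u v then ord_max else ord0].
have /forallP rQL : respects (coblock Q) L.
  apply: respPQ; apply/forallP => u; apply/forallP => w; apply/implyP.
  by rewrite coblockE // !ffunE /same_block => /eqP ->.
apply/subsetP => x xQv; have /implyP := forallP (rQL x) v.
rewrite coblockE // !ffunE /same_block eqxx !(eq_sym (pblock _ x)).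
rewrite !eq_pblock ?coverP ?coverQ ?inE // xQv => /(_ isT).
by case: (x \in pblock P v).
Qed.

Lemma eq_partition_respects P Q : partition P [set: T] -> partition Q [set: T] ->
  (forall L : {ffun T -> 'I_2}, respects (coblock P) L = respects (coblock Q) L) -> P = Q.
Proof.
move=> partP partQ eq_resp.
have eq_pb v : pblock P v = pblock Q v.
  by apply/eqP; rewrite eqEsubset !pblock_subset_respects // => L; rewrite eq_resp.
rewrite -(equivalence_partition_pblock partP) -(equivalence_partition_pblock partQ).
by apply: eq_imset => x; apply/setP => y; rewrite !inE eq_pb.
Qed.

Lemma eq_partition_n_comp_relU P Q : partition P [set: T] -> partition Q [set: T] ->
  n_comp (relU (coblock P) (coblock Q)) T = n_comp (coblock P) T ->
  n_comp (relU (coblock P) (coblock Q)) T = n_comp (coblock Q) T -> P = Q.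
Proof.
move=> partP partQ compP compQ.
have symPQ := relU_sym (@coblock_sym P) (@coblock_sym Q).
have toPQ := respects_n_comp_eq symPQ (@coblock_sym P) (@respects_relUl _ _ _ _) compP.
have toQP := respects_n_comp_eq symPQ (@coblock_sym Q) (@respects_relUr _ _ _ _) compQ.
apply: eq_partition_respects => // L; apply/idP/idP.
  by move/toPQ/respects_relUr.
by move/toQP/respects_relUl.
Qed.

End Partitions.

Notation labeling n N := {ffun 'I_n -> 'I_N}.

Section DiagramLabelings.

Variables (n N : nat).
Implicit Types (d e : diagram n) (i j m : labeling n N).

Definition vtx_labeling i j : {ffun vtx n -> 'I_N} :=
  [ffun v => match v with inl t => i t | inr t => j t end].

Definition adapted d i j : bool := respects (coblock d) (vtx_labeling i j).

Lemma adaptedE d i j :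
  is_diagram d -> adapted d i j = respects (same_block d) (vtx_labeling i j).
Proof. by move=> dP; apply/eq_respects/coblockE. Qed.

Lemma vtx_labeling_inj :
  injective (fun ij : labeling n N * labeling n N => vtx_labeling ij.1 ij.2).
Proof.
move=> [i j] [i' j'] /ffunP eq_ij; congr (_, _); apply/ffunP => t.
  by have := eq_ij (inl t); rewrite !ffunE.
by have := eq_ij (inr t); rewrite !ffunE.
Qed.

Lemma vtx_labeling_surj (L : {ffun vtx n -> 'I_N}) :
  vtx_labeling [ffun t => L (inl t)] [ffun t => L (inr t)] = L.
Proof. by apply/ffunP => -[t|t]; rewrite !ffunE. Qed.

Definition mid_row : 'I_3 := Ordinal (isT : 1 < 3).

Definition stacked_labeling i m j : {ffun wvtx n -> 'I_N} :=
  [ffun w => if val w.1 == 0 then i w.2 else if val w.1 == 1 then m w.2 else j w.2].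

Definition lift1 (a : vtx n) : wvtx n :=
  match a with inl t => (ord0, t) | inr t => (mid_row, t) end.

Definition lift2 (a : vtx n) : wvtx n :=
  match a with inl t => (mid_row, t) | inr t => (ord_max, t) end.

Lemma emb1_lift1 a : emb1 (lift1 a) = Some a. Proof. by case: a. Qed.

Lemma emb2_lift2 a : emb2 (lift2 a) = Some a. Proof. by case: a. Qed.

Lemma stacked_labeling_emb1 i m j w a :
  emb1 w = Some a -> stacked_labeling i m j w = vtx_labeling i m a.
Proof. by case: w => [[[|[|[|k]]] lt] t]; rewrite /emb1 //= => -[<-]; rewrite !ffunE. Qed.

Lemma stacked_labeling_emb2 i m j w a :
  emb2 w = Some a -> stacked_labeling i m j w = vtx_labeling m j a.
Proof. by case: w => [[[|[|[|k]]] lt] t]; rewrite /emb2 //= => -[<-]; rewrite !ffunE. Qed.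

Lemma cedge_sym d1 d2 : symmetric (cedge d1 d2).
Proof.
move=> u v; rewrite /cedge /same_block.
by case: (emb1 u) (emb1 v) (emb2 u) (emb2 v) => [a|] [b|] [c|] [f|] //=;
  rewrite ?[pblock _ b == _]eq_sym ?[pblock _ f == _]eq_sym.
Qed.

Lemma cedgeP d1 d2 u v : cedge d1 d2 u v ->
  (exists a b, [/\ emb1 u = Some a, emb1 v = Some b & same_block d1 a b]) \/
  (exists a b, [/\ emb2 u = Some a, emb2 v = Some b & same_block d2 a b]).
Proof.
rewrite /cedge => /orP [].
  by case: (emb1 u) => [a|] //; case: (emb1 v) => [b|] // ab; left; exists a, b.
by case: (emb2 u) => [a|] //; case: (emb2 v) => [b|] // ab; right; exists a, b.
Qed.

Lemma respects_cedge d1 d2 i m j : is_diagram d1 -> is_diagram d2 ->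
  respects (cedge d1 d2) (stacked_labeling i m j) = adapted d1 i m && adapted d2 m j.
Proof.
move=> d1P d2P; rewrite !adaptedE //.
apply/forallP/andP => [rL | [/forallP r1L /forallP r2L] u].
  split; apply/forallP => a; apply/forallP => b; apply/implyP => ab.
    have := implyP (forallP (rL (lift1 a)) (lift1 b)).
    by rewrite /cedge !emb1_lift1 ab !(stacked_labeling_emb1 _ _ _ (emb1_lift1 _)); apply.
  have := implyP (forallP (rL (lift2 a)) (lift2 b)).
  by rewrite /cedge !emb2_lift2 ab orbT !(stacked_labeling_emb2 _ _ _ (emb2_lift2 _)); apply.
apply/forallP => v; apply/implyP => /cedgeP [[a [b [Eu Ev ab]]] | [a [b [Eu Ev ab]]]].
  rewrite (stacked_labeling_emb1 _ _ _ Eu) (stacked_labeling_emb1 _ _ _ Ev).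
  exact: implyP (forallP (r1L a) b) ab.
rewrite (stacked_labeling_emb2 _ _ _ Eu) (stacked_labeling_emb2 _ _ _ Ev).
exact: implyP (forallP (r2L a) b) ab.
Qed.

Definition outer_rows : {set wvtx n} := [set w | val w.1 != 1].

Definition outer_labels i j (w : wvtx n) : 'I_N := if val w.1 == 0 then i w.2 else j w.2.

Lemma outer_in_rows v : outer v \in outer_rows.
Proof. by case: v => t; rewrite inE. Qed.

Lemma outer_rowsP w : w \in outer_rows -> exists v, w = outer v.
Proof.
case: w => [[[|[|[|k]]] lt] t]; rewrite inE //= => _.
  by exists (inl t); congr (_, _); apply: val_inj.
by exists (inr t); congr (_, _); apply: val_inj.
Qed.

Lemma outer_labels_outer i j v : outer_labels i j (outer v) = vtx_labeling i j v.
Proof. by case: v => t; rewrite /outer_labels ffunE. Qed.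

Lemma stacked_labelingE i j (L : {ffun wvtx n -> 'I_N}) :
  [forall x in outer_rows, L x == outer_labels i j x] ->
  L = stacked_labeling i [ffun t => L (mid_row, t)] j.
Proof.
move=> /forall_inP oL; apply/ffunP => -[[[|[|[|k]]] lt] t]; rewrite !ffunE //=.
- by rewrite (eqP (oL _ _)) // inE.
- by congr (L (_, t)); apply: val_inj.
- by rewrite (eqP (oL _ _)) // inE.
Qed.

Lemma card_adapted_mid d1 d2 i j : is_diagram d1 -> is_diagram d2 ->
  #|[set m | adapted d1 i m && adapted d2 m j]|
  = #|extensions (cedge d1 d2) outer_rows (outer_labels i j)|.
Proof.
move=> d1P d2P; have stacked_inj : injective (stacked_labeling i ^~ j).
  by move=> m1 m2 /ffunP eq_m; apply/ffunP => t; have := eq_m (mid_row, t); rewrite !ffunE.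
rewrite -(card_imset _ stacked_inj); apply: eq_card => L; rewrite inE.
apply/imsetP/andP => [[m] | [rL oL]].
  rewrite inE -respects_cedge // => rm ->; split=> //.
  by apply/forall_inP => w; rewrite inE /outer_labels ffunE => /negbTE ->.
by exists [ffun t => L (mid_row, t)]; rewrite ?inE -?respects_cedge -?stacked_labelingE.
Qed.

Lemma consistent_dcomp d1 d2 i j :
  consistent_on (cedge d1 d2) outer_rows (outer_labels i j) = adapted (dcomp d1 d2) i j.
Proof.
have csym : connect_sym (cedge d1 d2) by apply/sym_connect_sym/cedge_sym.
apply/forall_inP/forallP => [cons u | adp x xO].
  apply/forallP => v; apply/implyP => /exists_inP [B /imsetP [v0 _ ->]].
  rewrite !inE => /andP [cu cv].
  have cuv : connect (cedge d1 d2) (outer u) (outer v).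
    by rewrite csym in cu; exact: connect_trans cu cv.
  move: (implyP (forall_inP (cons _ (outer_in_rows u)) _ (outer_in_rows v)) cuv).
  by rewrite !outer_labels_outer.
apply/forall_inP => y yO; have [[u ->] [v ->]] := (outer_rowsP xO, outer_rowsP yO).
apply/implyP => cuv; rewrite !outer_labels_outer; apply: (implyP (forallP (adp u) v)).
apply/exists_inP; exists [set v' | connect (cedge d1 d2) (outer u) (outer v')].
  by apply/imsetP; exists u.
by rewrite !inE connect0.
Qed.

Lemma card_free_roots_cedge d1 d2 : #|free_roots (cedge d1 d2) outer_rows| = nloops d1 d2.
Proof.
rewrite /nloops (card_closed_classes (cedge_sym d1 d2)); apply: eq_card => s.
by rewrite !inE; congr (_ && _); apply: eq_forallb => w; rewrite inE negbK.
Qed.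

End DiagramLabelings.

Lemma dcomp_diagram n (d1 d2 : diagram n) : is_diagram (dcomp d1 d2).
Proof.
pose R u v := connect (cedge d1 d2) (outer u) (outer v).
have csym : connect_sym (cedge d1 d2) by apply/sym_connect_sym/cedge_sym.
have R_equiv : {in [set: vtx n] & &, equivalence_rel R}.
  move=> u v w _ _ _; rewrite /R connect0; split=> // cuv.
  apply/idP/idP => [cuw | cvw]; last exact: connect_trans cuv cvw.
  by rewrite csym in cuv; apply: connect_trans cuv cuw.
suff -> : dcomp d1 d2 = equivalence_partition R [set: vtx n].
  exact: equivalence_partitionP.
apply/setP => B; apply/imsetP/imsetP => -[u _ ->]; exists u => //.
  by apply/setP => v; rewrite !inE.
by apply/setP => v; rewrite !inE.
Qed.

Section Flip.

Variable n : nat.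
Implicit Types d e : diagram n.

Definition flip_vtx (v : vtx n) : vtx n :=
  match v with inl t => inr t | inr t => inl t end.

Lemma flip_vtxK : involutive flip_vtx. Proof. by case. Qed.

Definition flip_diagram d : diagram n := [set flip_vtx @: (B : {set vtx n}) | B in d].

Lemma flip_vtx_set_K : involutive (fun B : {set vtx n} => flip_vtx @: B).
Proof. by move=> B; rewrite -imset_comp (eq_imset _ flip_vtxK) imset_id. Qed.

Lemma flip_diagramK : involutive flip_diagram.
Proof.
by move=> d; rewrite /flip_diagram -imset_comp (eq_imset _ flip_vtx_set_K) imset_id.
Qed.

Lemma coblock_flip d u v :
  coblock (flip_diagram d) u v = coblock d (flip_vtx u) (flip_vtx v).
Proof.
have mem_flip B w : (w \in flip_vtx @: B) = (flip_vtx w \in B).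
  apply/imsetP/idP => [[x xB ->] | wB]; first by rewrite flip_vtxK.
  by exists (flip_vtx w); rewrite ?flip_vtxK.
apply/exists_inP/exists_inP => [[_ /imsetP [B Bd ->]] | [B Bd]].
  by rewrite !mem_flip => uvB; exists B.
by move=> uvB; exists (flip_vtx @: B); rewrite ?mem_flip ?imset_f.
Qed.

Lemma flip_diagram_diagram d : is_diagram d -> is_diagram (flip_diagram d).
Proof.
have flip_setT : flip_vtx @: [set: vtx n] = [set: vtx n].
  by apply/setP => v; rewrite inE -[v]flip_vtxK imset_f.
move=> dP; rewrite /is_diagram /flip_diagram -flip_setT imset_partition //.
exact: can_inj flip_vtxK.
Qed.

Lemma z2_stable_flip d : z2_stable d -> z2_stable (flip_diagram d).
Proof.
have gact_flip (v : vtx n) : gact (flip_vtx v) = flip_vtx (gact v) by case: v.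
move=> /forall_inP d_stable; apply/forall_inP => _ /imsetP [B Bd ->].
rewrite -imset_comp (eq_imset _ gact_flip) imset_comp.
exact/imset_f/d_stable.
Qed.

Lemma adapted_flip N d (i j : labeling n N) :
  adapted (flip_diagram d) i j = adapted d j i.
Proof.
rewrite /adapted (eq_respects _ (coblock_flip d)) (respects_conj _ _ flip_vtxK).
by congr respects; apply/ffunP => -[t|t]; rewrite !ffunE.
Qed.

End Flip.

Section TraceExponent.

Variable n : nat.
Implicit Types d e : diagram n.

(* The number of components of the closure of [e d]: the bottom row of [e] is glued
   to the top row of [d] and the bottom row of [d] to the top row of [e]. *)
Definition trace_exponent e d : nat :=
  n_comp (relU (coblock e) (coblock (flip_diagram d))) {: vtx n}.

Definition nblocks d : nat := n_comp (coblock d) {: vtx n}.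

Lemma trace_exponent_le_l e d : trace_exponent e d <= nblocks e.
Proof. exact/n_comp_relUl/coblock_sym/coblock_sym. Qed.

Lemma trace_exponent_le_r e d : trace_exponent e d <= nblocks (flip_diagram d).
Proof. exact/n_comp_relUr/coblock_sym/coblock_sym. Qed.

Lemma trace_exponent_flip d : trace_exponent (flip_diagram d) d = nblocks (flip_diagram d).
Proof. exact: n_comp_relUid. Qed.

Lemma trace_exponent_flip_eq d0 d : is_diagram d0 -> is_diagram d ->
  trace_exponent (flip_diagram d0) d = nblocks (flip_diagram d0) ->
  trace_exponent (flip_diagram d0) d = nblocks (flip_diagram d) -> d = d0.
Proof.
move=> d0P dP eq0 eq1; apply/esym/(can_inj (@flip_diagramK n)).
by apply: eq_partition_n_comp_relU eq0 eq1; apply: flip_diagram_diagram.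
Qed.

End TraceExponent.

Local Open Scope ring_scope.

Section DiagramMatrices.

Variables (K : fieldType) (n : nat).
Implicit Types d e : diagram n.

Lemma sumr_indicator (T : finType) (A P : pred T) :
  \sum_(x | A x) ((P x)%:R : K) = #|[predI A & P]|%:R.
Proof.
rewrite (eq_bigr (fun x => if P x then 1 else 0)) => [|x _]; last by case: (P x).
by rewrite -big_mkcondr sumr_const.
Qed.

Lemma sum_enum_val_indicator (T : finType) (P : pred T) :
  \sum_(c < #|{: T}|) ((P (enum_val c))%:R : K) = #|[set x | P x]|%:R.
Proof.
rewrite -(big_enum_val (fun x => (P x)%:R)) sumr_indicator.
by congr _%:R; apply: eq_card => x; rewrite !inE.
Qed.

Lemma sum_enum_val_indicator2 (T : finType) (P : rel T) :
  \sum_(a < #|{: T}|) \sum_(c < #|{: T}|) ((P (enum_val a) (enum_val c))%:R : K)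
  = #|[set p : T * T | P p.1 p.2]|%:R.
Proof.
rewrite -(big_enum_val (fun x => \sum_(c < #|{: T}|) ((P x (enum_val c))%:R : K))) /=.
under eq_bigr => x _ do rewrite -(big_enum_val (fun y => ((P x y)%:R : K))).
rewrite pair_big /= sumr_indicator.
by congr _%:R; apply: eq_card => x; rewrite !inE.
Qed.

(* The action of [d] on (K^N)^{(x)n}, in the basis indexed by labelings. *)
Definition diagram_mx N d : 'M[K]_#|{: labeling n N}| :=
  \matrix_(a, b) (adapted d (enum_val a) (enum_val b))%:R.

(* Composing [d1] and [d2] sums over labelings of the middle row; these are the
   extensions of a labeling of the outer rows, one free label per closed loop. *)
Lemma diagram_mx_mul N d1 d2 : is_diagram d1 -> is_diagram d2 ->
  diagram_mx N d1 *m diagram_mx N d2 = N%:R ^+ nloops d1 d2 *: diagram_mx N (dcomp d1 d2).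
Proof.
move=> d1P d2P; apply/matrixP => a b; rewrite !mxE.
under eq_bigr => c _ do rewrite !mxE -natrM mulnb.
rewrite (sum_enum_val_indicator
  (fun m => adapted d1 (enum_val a) m && adapted d2 m (enum_val b))).
rewrite card_adapted_mid // card_extensions ?consistent_dcomp ?card_free_roots_cedge;
  last exact: cedge_sym.
by case: (adapted _ _ _); rewrite ?natrX ?mulr1 ?mulr0.
Qed.

Lemma mxtrace_diagram_mx_mul N e d :
  \tr (diagram_mx N.+1 e *m diagram_mx N.+1 d) = (N.+1 ^ trace_exponent e d)%:R.
Proof.
have -> : \tr (diagram_mx N.+1 e *m diagram_mx N.+1 d) =
    \sum_(a < #|{: labeling n N.+1}|) \sum_(c < #|{: labeling n N.+1}|)
    ((adapted e (enum_val a) (enum_val c) && adapted d (enum_val c) (enum_val a))%:R).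
  by apply: eq_bigr => a _; rewrite !mxE; apply: eq_bigr => c _; rewrite !mxE -natrM mulnb.
rewrite (sum_enum_val_indicator2 (fun i j => adapted e i j && adapted d j i)).
rewrite -(card_respects (relU_sym (@coblock_sym _ e) (@coblock_sym _ (flip_diagram d)))).
rewrite -(card_imset _ (@vtx_labeling_inj n N.+1)); congr _%:R; apply: eq_card => L.
rewrite inE respects_relU; apply/imsetP/idP => [[[i j]] | rL].
  rewrite inE /= => ij ->.
  by change (adapted e i j && adapted (flip_diagram d) i j); rewrite adapted_flip.
exists ([ffun t => L (inl t)], [ffun t => L (inr t)]); last by rewrite vtx_labeling_surj.
by rewrite inE /= -(adapted_flip d) /adapted vtx_labeling_surj.
Qed.

End DiagramMatrices.

Section Nondegeneracy.

Variables (K : fieldType) (n : nat) (Pd : pred (diagram n)).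
Hypothesis Pd_flip : forall d, Pd d -> Pd (flip_diagram d).

Definition trace_poly (p : {ffun diagram n -> {poly K}}) (e : diagram n) : {poly K} :=
  \sum_d p d * 'X^(trace_exponent e d).

(* Against [e = flip_diagram d0] the term of [d0] dominates, where [d0] maximises
   [2 * size (p d) + nblocks (flip_diagram d)] on the support of [p]. *)
Lemma trace_poly_nondegenerate (p : {ffun diagram n -> {poly K}}) :
  (forall d, p d != 0 -> is_diagram d && Pd d) ->
  (forall e, is_diagram e -> Pd e -> trace_poly p e = 0) -> p = 0.
Proof.
move=> p_supp p_trace; apply/ffunP => d1; rewrite ffunE; apply/eqP/negPn/negP => pd1.
pose score d := (2 * size (p d) + nblocks (flip_diagram d))%N.
have [d0 pd0 d0_max] := @arg_maxnP _ d1 (fun d => p d != 0) score pd1.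
have /andP [d0P Pd0] := p_supp d0 pd0.
set e := flip_diagram d0.
have size_d0 : size (p d0 * 'X^(trace_exponent e d0)) = (nblocks e + size (p d0))%N.
  by rewrite size_mulXn // trace_exponent_flip.
have size_lt d : d != d0 ->
    (size ((p d * 'X^(trace_exponent e d))%R) < nblocks e + size (p d0))%N.
  move=> dd0; have [->|pd] := eqVneq (p d) 0%R.
    by rewrite mul0r size_poly0 addn_gt0 size_poly_gt0 pd0 orbT.
  have /andP [dP _] := p_supp d pd.
  have : (score d <= score d0)%N := d0_max d pd.
  rewrite /score -/e size_mulXn //.
  have le_e := trace_exponent_le_l e d; have le_d := trace_exponent_le_r e d.
  have : ~ (trace_exponent e d = nblocks e /\ trace_exponent e d = nblocks (flip_diagram d)).
    by move=> [eq0 eq1]; move/eqP: dd0; apply; apply: trace_exponent_flip_eq.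
  lia.
suff : trace_poly p e != 0 by rewrite p_trace ?eqxx ?flip_diagram_diagram ?Pd_flip.
rewrite -size_poly_eq0 /trace_poly (bigD1 d0) //= size_polyDl size_d0.
  by rewrite addn_eq0 size_poly_eq0 (negbTE pd0) andbF.
elim/big_rec: _ => [|d q dd0 IHq]; first by rewrite size_poly0 addn_gt0 size_poly_gt0 pd0 orbT.
by apply: leq_ltn_trans (size_polyD _ _) _; rewrite gtn_max IHq size_lt.
Qed.

End Nondegeneracy.

Lemma mxtrace_nilpotent (F : fieldType) k (A : 'M[F]_k) m : A ^+ m = 0 -> \tr A = 0.
Proof.
case: k A => [|k] A Am; first by rewrite /mxtrace big_ord0.
have dvd_X : char_poly A %| ('X - 0%:P) ^+ (m * k.+1).
  pose XI : 'M[{poly F}]_k.+1 := 'X%:M; pose Ap := map_mx polyC A.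
  have cXA : GRing.comm XI Ap by rewrite /GRing.comm /XI -!mulmxE scalar_mxC.
  have Apm : Ap ^+ m = 0 by rewrite /Ap -rmorphXn /= Am map_mx0.
  have -> : ('X - 0%:P) ^+ (m * k.+1) = \det (XI ^+ m).
    by rewrite subr0 exprM /XI -rmorphXn /= det_scalar.
  rewrite -[XI ^+ m]subr0 -Apm (subrXX_comm m cXA) -mulmxE det_mulmx; exact: dvdp_mulIl.
have [j _ pj] := dvdp_exp_XsubCP dvd_X.
have {}pj : char_poly A = 'X ^+ j.
  by apply/eqP; rewrite subr0 in pj; rewrite -eqp_monic ?char_poly_monic ?monicXn.
have jk : j = k.+1 by have := size_char_poly A; rewrite pj size_polyXn => -[].
have := char_poly_trace A (ltn0Sn k); rewrite pj jk coefXn eqn_leq ltnn andbF /=.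
by move/esym/eqP; rewrite oppr_eq0 => /eqP.
Qed.

Lemma poly_eq0_natS_roots (F : fieldType) (P : {poly F}) :
  [pchar F] =i pred0 -> (forall N : nat, P.[N.+1%:R] = 0) -> P = 0.
Proof.
move=> /pcharf0P charF0 P_roots.
have natr_inj : injective (fun i : nat => i%:R : F).
  move=> i j /= eq_ij; wlog le_ij : i j eq_ij / (i <= j)%N.
    by move=> W; case/orP: (leq_total i j) => ?; [|apply/esym]; apply: W.
  move/eqP: eq_ij; rewrite eq_sym -subr_eq0 -natrB // charF0 subn_eq0 => le_ji.
  by apply/eqP; rewrite eqn_leq le_ij.
apply: (@roots_geq_poly_eq0 _ P [seq i.+1%:R | i <- iota 0 (size P)]).
- by apply/allP => _ /mapP [i _ ->]; apply/rootP.
- by rewrite map_inj_uniq ?iota_uniq // => i j /natr_inj [].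
- by rewrite size_map size_iota.
Qed.

Local Notation "x %:F" := (FracField.tofrac x).
Local Open Scope quotient_scope.

Lemma mul_frac_denom (R : idomainType) (f : {fraction R}) :
  f * (\d_(repr f))%:F = (\n_(repr f))%:F.
Proof.
set x := repr f; rewrite -[f in LHS]reprK -/x.
change (FracField.mul (\pi_({fraction R}) x) (\d_x)%:F = (\n_x)%:F).
rewrite !piE; apply/eqmodP; rewrite /= FracField.equivfE /FracField.mulf /=.
by rewrite !numden_Ratio ?mulf_neq0 ?oner_neq0 ?denom_ratioP // !mulr1 mulrC.
Qed.

Lemma clear_denominators (R : idomainType) (I : finType) (a : I -> {fraction R}) :
  exists2 q, q != 0 & exists p : {ffun I -> R}, forall i, q%:F * a i = (p i)%:F.
Proof.
pose den i := \d_(repr (a i)).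
exists (\prod_i den i); first by apply/prodf_neq0 => i _; apply: denom_ratioP.
exists [ffun i => \n_(repr (a i)) * \prod_(j | j != i) den j] => i.
by rewrite ffunE (bigD1 i) //= !rmorphM /= -mul_frac_denom -/(den i) mulrAC [_ * a i]mulrC.
Qed.

Section PolynomialCoefficients.

Variables (K : fieldType) (n : nat).
Local Notation coefs := {ffun diagram n -> {poly K}}.
Implicit Types (p q c : coefs) (d e : diagram n).

Definition frac_pa p : PA {fraction {poly K}} n := [ffun d => (p d)%:F].

Definition poly_pa_mul p q : coefs :=
  [ffun d => \sum_(d1 : diagram n) \sum_(d2 : diagram n)
     (if dcomp d1 d2 == d then p d1 * q d2 * 'X ^+ nloops d1 d2 else 0)].

Lemma frac_pa_mul p q : pa_mul (xK K) (frac_pa p) (frac_pa q) = frac_pa (poly_pa_mul p q).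
Proof.
apply/ffunP => d; rewrite !ffunE rmorph_sum; apply: eq_bigr => d1 _.
rewrite rmorph_sum; apply: eq_bigr => d2 _; rewrite !ffunE.
by case: ifP => _; rewrite ?rmorph0 // !rmorphM rmorphXn.
Qed.

Lemma frac_pa_inj : injective frac_pa.
Proof.
move=> p q /ffunP eq_pq; apply/ffunP => d.
by have /eqP := eq_pq d; rewrite !ffunE tofrac_eq => /eqP.
Qed.

Lemma frac_pa0 : frac_pa 0 = 0.
Proof. by apply/ffunP => d; rewrite !ffunE rmorph0. Qed.

Lemma frac_pa_foldl p (s : seq coefs) :
  foldl (pa_mul (xK K)) (frac_pa p) (map frac_pa s) = frac_pa (foldl poly_pa_mul p s).
Proof. by elim: s p => [|q s IHs] p //=; rewrite frac_pa_mul IHs. Qed.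

Definition on_diagrams p : Prop := forall d, p d != 0 -> is_diagram d.

Lemma on_diagrams_mul p q : on_diagrams (poly_pa_mul p q).
Proof.
move=> d; rewrite ffunE; apply: contraNT => dnP; apply/eqP.
apply: big1 => d1 _; apply: big1 => d2 _.
by case: eqP => // eq_d; case/negP: dnP; rewrite -eq_d dcomp_diagram.
Qed.

Definition pa_delta e : coefs := [ffun d => if d == e then 1 else 0].

Lemma on_diagrams_delta e : is_diagram e -> on_diagrams (pa_delta e).
Proof. by move=> eP d; rewrite ffunE; case: ifP => [/eqP -> | _]; rewrite ?eqxx. Qed.

Definition eval_mx N p : 'M[K]_#|{: labeling n N}| :=
  \sum_d (p d).[N%:R] *: diagram_mx K N d.

Lemma eval_mx0 N : eval_mx N 0 = 0.
Proof. by apply: big1 => d _; rewrite ffunE horner0 scale0r. Qed.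

Lemma eval_mx_delta N e : eval_mx N (pa_delta e) = diagram_mx K N e.
Proof.
rewrite /eval_mx (bigD1 e) //= ffunE eqxx hornerC scale1r big1 ?addr0 // => d /negbTE de.
by rewrite ffunE de horner0 scale0r.
Qed.

Lemma eval_mx_mul N p q : on_diagrams p -> on_diagrams q ->
  eval_mx N (poly_pa_mul p q) = eval_mx N p *m eval_mx N q.
Proof.
move=> pD qD; rewrite /eval_mx mulmx_suml.
under eq_bigr => d _ do rewrite ffunE horner_sum scaler_suml.
rewrite exchange_big /=; apply: eq_bigr => d1 _.
under eq_bigr => d _ do rewrite horner_sum scaler_suml.
rewrite exchange_big /= mulmx_sumr; apply: eq_bigr => d2 _.
rewrite (bigD1 (dcomp d1 d2)) //= eqxx big1 ?addr0 => [|d]; last first.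
  by rewrite eq_sym => /negbTE ->; rewrite horner0 scale0r.
rewrite -scalemxAl -scalemxAr scalerA.
have [->|p0] := eqVneq (p d1) 0; first by rewrite !(mul0r, horner0, scale0r).
have [->|q0] := eqVneq (q d2) 0; first by rewrite !(mulr0, mul0r, horner0, scale0r).
by rewrite diagram_mx_mul ?(pD d1) ?(qD d2) // scalerA !hornerE.
Qed.

Lemma eval_mx_foldl_nseq N a c m : on_diagrams a -> on_diagrams c ->
  eval_mx N (foldl poly_pa_mul a (nseq m c)) = eval_mx N a * eval_mx N c ^+ m.
Proof.
elim: m a => [|m IHm] a aD cD /=; first by rewrite mulr1.
rewrite IHm //; last exact: on_diagrams_mul.
by rewrite eval_mx_mul // mulmxE -mulrA -exprS.
Qed.

Lemma mxtrace_eval_mx_delta_mul N e p : is_diagram e -> on_diagrams p ->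
  \tr (eval_mx N.+1 (poly_pa_mul (pa_delta e) p)) = (trace_poly p e).[N.+1%:R].
Proof.
move=> /on_diagrams_delta eD pD; rewrite eval_mx_mul // eval_mx_delta.
rewrite /eval_mx mulmx_sumr raddf_sum horner_sum; apply: eq_bigr => d _ /=.
by rewrite -scalemxAr mxtraceZ mxtrace_diagram_mx_mul hornerM hornerXn natrX mulrC.
Qed.

Lemma mxtrace_eval_mx_nil N c m : on_diagrams c ->
  foldl (pa_mul (xK K)) (frac_pa c) (nseq m (frac_pa c)) = 0 -> \tr (eval_mx N c) = 0.
Proof.
move=> cD c_nil; apply: (@mxtrace_nilpotent _ _ _ m.+1).
rewrite exprS -eval_mx_foldl_nseq //.
suff -> : foldl poly_pa_mul c (nseq m c) = 0 by rewrite eval_mx0.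
by apply: frac_pa_inj; rewrite -frac_pa_foldl map_nseq frac_pa0.
Qed.

End PolynomialCoefficients.

Definition diagram_span (F : fieldType) n (Pd : pred (diagram n)) : pred (PA F n) :=
  fun f => [forall d, (f d != 0) ==> (is_diagram d && Pd d)].

Lemma diagram_span_delta (K : fieldType) n (Pd : pred (diagram n)) e :
  is_diagram e -> Pd e -> diagram_span Pd (frac_pa (pa_delta K e)).
Proof.
move=> eP Pe; apply/forallP => d; rewrite !ffunE.
by case: ifP => [/eqP -> | _]; rewrite ?eP ?Pe ?implybT // rmorph0 eqxx.
Qed.

Theorem semisimple_diagram_span (K : fieldType) n (Pd : pred (diagram n)) :
  [pchar K] =i pred0 -> (forall d, Pd d -> Pd (flip_diagram d)) ->
  semisimple (diagram_span Pd) (pa_mul (xK K)).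
Proof.
move=> charK0 Pd_flip I [I_span _ _ I_scale I_mul] [m I_nil] a Ia.
have [q q0 [p eq_qa]] := clear_denominators a.
have Ip : I (frac_pa p).
  have -> : frac_pa p = q%:F *: a by apply/ffunP => d; rewrite !ffunE -eq_qa.
  exact: I_scale.
have p_supp d : p d != 0 -> is_diagram d && Pd d.
  by move=> pd; have /forallP/(_ d) := I_span _ Ip; rewrite ffunE tofrac_eq0 pd.
have pD : on_diagrams p by move=> d /p_supp /andP [].
suff p0 : p = 0.
  apply/ffunP => d; have := eq_qa d; rewrite p0 !ffunE rmorph0 => /eqP.
  by rewrite mulf_eq0 tofrac_eq0 (negbTE q0) => /eqP.
apply: (trace_poly_nondegenerate Pd_flip p_supp) => e eP Pe.
apply: (poly_eq0_natS_roots charK0) => N; rewrite -mxtrace_eval_mx_delta_mul //.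
set c := poly_pa_mul (pa_delta K e) p.
have Ic : I (frac_pa c).
  by rewrite -frac_pa_mul; apply: (I_mul _ _ (diagram_span_delta K eP Pe) Ip).1.
have c_nil := I_nil _ (nseq m (frac_pa c)) (size_nseq _ _) Ic.
apply: (mxtrace_eval_mx_nil _ (@on_diagrams_mul _ _ _ _) (c_nil _)).
by move=> b /nseqP [-> _].
Qed.

Unset Implicit Arguments.

(* The argument works for every [k]. *)
Theorem theorem4p5 (K : fieldType) (charK0 : [pchar K]%R =i pred0) (k : nat) (hk : (1 <= k)%N) :
  semisimple (@z2_alg {fraction {poly K}} k) (@pa_mul _ k.*2 (xK K)).
Proof. exact: semisimple_diagram_span charK0 (@z2_stable_flip _). Qed.
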